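(* Let $n$ be a power of $2$, let $w\ge1$, and let $\mathbf{M}_1,\dots,\mathbf{M}_n$ be $w\times w$ real matrices. For every $(\ell,r)\in\mathsf{BS}_n$ with $r-\ell\ge2$ let $\mathbf{M}^{(0)}_{\ell..r}$ be a given $w\times w$ real matrix, and set $\mathbf{M}^{(0)}_{r-1..r}=\mathbf{M}_r$. Define $\mathbf{M}^{(k)}_{\ell..r}$ for all integers $k\ge0$ and $(\ell,r)\in\mathsf{BS}_n$ by the recursion in the context. Then for every integer $k\ge0$ and every $(\ell,r)\in\mathsf{BS}_n$ there is a multiset $S\subseteq\mathsf{IS}_{\ell..r}\times\{-1,+1\}$ such that (i) $\mathbf{M}^{(k)}_{\ell..r}=\sum_{(\mathsf{sq},\sigma)\in S}\sigma\,\mathbf{M}^{(0)}_{\mathsf{sq}}$; (ii) $|S|\le(r-\ell)^{2k}$; (iii) for every $(\mathsf{sq},\sigma)\in S$, the length of $\mathsf{sq}$ is at most $k\log(r-\ell)+1$.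
   Context: Logarithms are base $2$. $\mathsf{BS}_n=\{(\ell,r):\exists i,k\ge 0,\ \ell=i2^k,\ r=\ell+2^k,\ 0\le\ell<r\le n\}$. Recursion: for $(\ell,r)\in\mathsf{BS}_n$ with $r-\ell=1$, $\mathbf{M}^{(k)}_{\ell..r}=\mathbf{M}_r$ for all $k\ge0$; for $r-\ell\ge2$ and $k\ge1$, with $m=(\ell+r)/2$, $$\mathbf{M}^{(k)}_{\ell..r}=\sum_{i+j=k}\mathbf{M}^{(i)}_{\ell..m}\mathbf{M}^{(j)}_{m..r}-\sum_{i+j=k-1}\mathbf{M}^{(i)}_{\ell..m}\mathbf{M}^{(j)}_{m..r}$$ (sums over integers $i,j\ge0$). For $0\le\ell<r\le n$, $\mathsf{IS}_{\ell..r}$ is the set of increasing sequences $\mathsf{sq}=(i_0,i_1,\dots,i_h)$ with $\ell=i_0<i_1<\dots<i_h=r$; $h$ is the length of $\mathsf{sq}$. In the sequences appearing here each consecutive pair $(i_{j-1},i_j)$ lies in $\mathsf{BS}_n$, and $\mathbf{M}^{(0)}_{\mathsf{sq}}=\prod_{j=1}^h\mathbf{M}^{(0)}_{i_{j-1}..i_j}$. *)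

From mathcomp Require Import all_boot all_order all_algebra.
From mathcomp Require Import reals.
Set Implicit Arguments. Unset Strict Implicit. Unset Printing Implicit Defensive.
Import Order.TTheory GRing.Theory Num.Theory.
Local Open Scope ring_scope.

Definition isBS (n l r : nat) : Prop :=
  exists i k : nat, l = (i * 2 ^ k)%N /\ r = (l + 2 ^ k)%N /\ (r <= n)%N.

Section Rec.
Variables (R : realType) (w : nat).
Variable M : nat -> 'M[R]_w.          (* M r = M_r, 1 <= r <= n *)
Variable M0 : nat -> nat -> 'M[R]_w.  (* M0 l r = given M^(0)_{l..r} for r - l >= 2 *)

(* segM e l k = M^{(k)}_{l..l+2^e} *)
Fixpoint segM (e l k : nat) {struct e} : 'M[R]_w :=
  match e with
  | 0 => M l.+1
  | e'.+1 =>
      match k with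
      | 0 => M0 l (l + 2 ^ e'.+1)%N
      | k'.+1 =>
          \sum_(i < k.+1) (segM e' l i *m segM e' (l + 2 ^ e')%N (k - i)%N)
          - \sum_(i < k) (segM e' l i *m segM e' (l + 2 ^ e')%N (k' - i)%N)
      end
  end.

(* M^{(k)}_{l..r} for (l, r) in BS_n (so r - l is a power of 2) *)
Definition Mseg (l r k : nat) : 'M[R]_w := segM (trunc_log 2 (r - l)) l k.

Definition M0seq (sq : seq nat) : 'M[R]_w :=
  foldr (fun p A => Mseg p.1 p.2 0 *m A) 1%:M (zip sq (behead sq)).
End Rec.

Definition inIS (n l r : nat) (sq : seq nat) : Prop :=
  [/\ (0 < size sq)%N, sorted ltn sq, head 0%N sq = l, last 0%N sq = r &
      forall j : nat, (j.+1 < size sq)%N -> isBS n (nth 0%N sq j) (nth 0%N sq j.+1)].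

Definition sgn (R : realType) (b : bool) : R := if b then 1 else -1.

From mathcomp Require Import all_boot all_order all_algebra.
From mathcomp Require Import reals.
From mathcomp Require Import zify.
Set Implicit Arguments. Unset Strict Implicit. Unset Printing Implicit Defensive.
Import Order.TTheory GRing.Theory Num.Theory.
Local Open Scope ring_scope.

(* Induction on e = log (r - l).  For k >= 1 the recursion writes M^(k)_{l..r}
   as a signed sum of 2k+1 products M^(i)_{l..m} M^(j)_{m..r} with i + j <= k,
   m the midpoint.  Expanding both factors by induction and gluing sequences at
   m expands each product into at most (2^e)^(2k) signed terms of length at
   most k e + 2; since 2k+1 <= 4^k, the 2k+1 products together stay within
   (2^(e+1))^(2k) terms of length at most k (e+1) + 1. *)

Lemma sgn_eqb (R : realType) (a b : bool) : sgn R (a == b) = sgn R a * sgn R b.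
Proof. by case: a; case: b; rewrite /sgn /= ?mulr1 ?mul1r ?mulN1r ?opprK. Qed.

Lemma sgn_negb (R : realType) (b : bool) : sgn R (~~ b) = - sgn R b.
Proof. by case: b; rewrite /sgn ?opprK. Qed.

Lemma isBS_halves n l e : isBS n l (l + 2 ^ e.+1)%N ->
  isBS n l (l + 2 ^ e)%N /\ isBS n (l + 2 ^ e)%N (l + 2 ^ e + 2 ^ e)%N.
Proof.
case=> i [e' [El [/eqP + le_rn]]].
rewrite eqn_add2l eqn_exp2l // => /eqP Ee; subst e'.
rewrite expnS in El le_rn.
split; [exists (2 * i)%N, e | exists (2 * i).+1, e]; split; lia.
Qed.

Lemma size_join (T : Type) (a b : seq T) : (0 < size a)%N -> (0 < size b)%N ->
  (size (a ++ behead b)).-1 = ((size a).-1 + (size b).-1)%N.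
Proof. by case: a => // x a; case: b => // y b; rewrite /= size_cat. Qed.

Section Expansion.
Variables (R : realType) (n w : nat).
Variables (M : nat -> 'M[R]_w) (M0 : nat -> nat -> 'M[R]_w).

Lemma M0seq_cat x t y u : last x t = y ->
  M0seq M M0 (x :: t ++ u) = M0seq M M0 (x :: t) *m M0seq M M0 (y :: u).
Proof.
elim: t x => [|z t IH] x /= Elast; first by rewrite /M0seq /= mul1mx Elast.
by rewrite /M0seq /= -mulmxA; congr (_ *m _); apply: IH.
Qed.

Lemma inIS_last l r a : inIS n l r a -> last (head 0%N a) (behead a) = r.
Proof. by case: a => [|x a] [] //=. Qed.

Lemma M0seq_join l m r a b : inIS n l m a -> inIS n m r b ->
  M0seq M M0 (a ++ behead b) = M0seq M M0 a *m M0seq M M0 b.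
Proof.
case: a => [|x t] Ia; first by case: Ia.
case: b => [|y u] Ib; first by case: Ib.
by apply: M0seq_cat; rewrite (inIS_last Ia); case: Ib.
Qed.

Lemma inIS_join l m r a b : inIS n l m a -> inIS n m r b ->
  inIS n l r (a ++ behead b).
Proof.
case: a => [|x t] Ia; first by case: Ia.
case: b => [|y u] Ib; first by case: Ib.
have Elast : last x t = y by rewrite (inIS_last Ia); case: Ib.
have Ecat : x :: t ++ u = belast x t ++ y :: u.
  by rewrite -cat_rcons -Elast -lastI.
case: Ia Ib => _ sorted_a /= <- _ bs_a [_ sorted_b _ last_b bs_b].
split=> //=.
- by rewrite cat_path Elast; apply/andP.
- by rewrite last_cat Elast.
move=> j; rewrite size_cat /= => lt_j.
have [lt_jt | le_tj] := ltnP j (size t).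
  rewrite -cat_cons !nth_cat /= ltnS (ltnW lt_jt) lt_jt.
  by apply: bs_a; rewrite /= ltnS.
rewrite Ecat !nth_cat size_belast !ltnNge le_tj /=.
by apply: bs_b => /=; lia.
Qed.

Definition join_term (a b : seq nat * bool) := (a.1 ++ behead b.1, a.2 == b.2).
Definition opp_term (s : seq nat * bool) := (s.1, ~~ s.2).

Definition expansion (A : 'M[R]_w) (l r N L : nat) (S : seq (seq nat * bool)) :=
  [/\ A = \sum_(s <- S) sgn R s.2 *: M0seq M M0 s.1,
      (size S <= N)%N &
      forall s, s \in S -> inIS n l r s.1 /\ ((size s.1).-1 <= L)%N].

Lemma expansion_le A l r N N' L L' S : (N <= N')%N -> (L <= L')%N ->
  expansion A l r N L S -> expansion A l r N' L' S.
Proof.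
move=> le_N le_L [EA szS inS]; split=> [//||s /inS [Is Ls]].
  exact: leq_trans le_N.
by split; last exact: leq_trans le_L.
Qed.

Lemma expansion_mul A B l m r N1 N2 L1 L2 SA SB :
  expansion A l m N1 L1 SA -> expansion B m r N2 L2 SB ->
  expansion (A *m B) l r (N1 * N2)%N (L1 + L2)%N
    [seq join_term a b | a <- SA, b <- SB].
Proof.
case=> -> szA inA [-> szB inB]; split.
- rewrite big_allpairs_dep mulmx_suml; apply: eq_big_seq => a /inA [Ia _].
  rewrite mulmx_sumr; apply: eq_big_seq => b /inB [Ib _].
  by rewrite /= (M0seq_join Ia Ib) sgn_eqb -scalerA scalemxAr scalemxAl.
- by rewrite size_allpairs leq_mul.
move=> _ /allpairsP [[a b] /= [/inA [Ia La] /inB [Ib Lb] ->]] /=.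
split; first exact: inIS_join Ia Ib.
by case: Ia Ib => pos_a _ _ _ _ [pos_b _ _ _ _]; rewrite size_join // leq_add.
Qed.

Lemma expansion_cat A B l r N1 N2 L SA SB :
  expansion A l r N1 L SA -> expansion B l r N2 L SB ->
  expansion (A + B) l r (N1 + N2)%N L (SA ++ SB).
Proof.
case=> -> szA inA [-> szB inB]; split.
- by rewrite big_cat.
- by rewrite size_cat leq_add.
by move=> s; rewrite mem_cat => /orP [/inA | /inB].
Qed.

Lemma expansion_opp A l r N L S :
  expansion A l r N L S -> expansion (- A) l r N L (map opp_term S).
Proof.
case=> -> szS inS; split.
- by rewrite big_map -sumrN; apply: eq_bigr => s _; rewrite sgn_negb scaleNr.
- by rewrite size_map.
by move=> _ /mapP [s /inS Is ->].
Qed.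

Lemma expansion_sum (I : eqType) (s : seq I) (F : I -> 'M[R]_w) l r N L :
  (forall i, i \in s -> exists S, expansion (F i) l r N L S) ->
  exists S, expansion (\sum_(i <- s) F i) l r (size s * N)%N L S.
Proof.
elim: s => [|i s IH] expF.
  by exists [::]; split; rewrite ?big_nil.
have [Si Ei] := expF i (mem_head i s).
have [Ss Es] : exists S, expansion (\sum_(j <- s) F j) l r (size s * N)%N L S.
  by apply: IH => j js; apply: expF; rewrite inE js orbT.
by exists (Si ++ Ss); rewrite big_cons mulSn; apply: expansion_cat.
Qed.

Lemma expansion_segM0 e l : isBS n l (l + 2 ^ e)%N ->
  expansion (segM M M0 e l 0) l (l + 2 ^ e)%N 1 1
    [:: ([:: l; l + 2 ^ e]%N, true)].
Proof.
move=> bs; split=> //.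
  by rewrite big_seq1 scale1r /M0seq /= mulmx1 /Mseg addKn trunc_expnK.
move=> _ /[!inE] /eqP -> /=; split=> //; split=> //=.
- by rewrite andbT -addn1 leq_add2l expn_gt0.
- by case.
Qed.

Lemma segM_succ e l k :
  segM M M0 e.+1 l k.+1 =
      \sum_(0 <= i < k.+2)
        segM M M0 e l i *m segM M M0 e (l + 2 ^ e)%N (k.+1 - i)%N
    - \sum_(0 <= i < k.+1)
        segM M M0 e l i *m segM M M0 e (l + 2 ^ e)%N (k - i)%N.
Proof. by rewrite /= !big_mkord. Qed.

Lemma segM_expansion e l k : isBS n l (l + 2 ^ e)%N ->
  exists S, expansion (segM M M0 e l k) l (l + 2 ^ e)%N
                      ((2 ^ e) ^ (2 * k))%N (k * e + 1)%N S.
Proof.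
(* segM 0 l k is M_(l+1) for every k, so the cases e = 0 reduce to k = 0. *)
elim: e l k => [|e IH] l [|k] bs;
  try by eexists; apply: expansion_le (expansion_segM0 bs);
        rewrite ?exp1n ?muln0.
have [bs_l bs_r] := isBS_halves bs.
set m := (l + 2 ^ e)%N in bs_l bs_r.
have Er : (l + 2 ^ e.+1 = m + 2 ^ e)%N by rewrite /m expnS; lia.
set Y := ((2 ^ e) ^ (2 * k.+1))%N.
have product i j : (i + j <= k.+1)%N -> exists S,
    expansion (segM M M0 e l i *m segM M M0 e m j) l (l + 2 ^ e.+1)%N
              Y (k.+1 * e + 2)%N S.
  move=> le_ij; have [SA EA] := IH l i bs_l; have [SB EB] := IH m j bs_r.
  rewrite Er; eexists; apply: expansion_le (expansion_mul EA EB).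
    by rewrite -expnD leq_pexp2l ?expn_gt0 //; lia.
  have : ((i + j) * e <= k.+1 * e)%N by apply: leq_mul.
  by rewrite mulnDl; lia.
have convolution j : (j <= k.+1)%N -> exists S, expansion
    (\sum_(0 <= i < j.+1) segM M M0 e l i *m segM M M0 e m (j - i)%N)
    l (l + 2 ^ e.+1)%N (j.+1 * Y)%N (k.+1 * e + 2)%N S.
  move=> le_jk; rewrite -[X in (X * Y)%N](size_iota 0 j.+1).
  by apply: expansion_sum => i /[!mem_index_iota] lt_ij; apply: product; lia.
have [S1 E1] := convolution k.+1 (leqnn _).
have [S2 E2] := convolution k (leqnSn _).
exists (S1 ++ map opp_term S2); rewrite segM_succ.
apply: expansion_le (expansion_cat E1 (expansion_opp E2));
  last by rewrite mulnS; lia.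
have : (2 * k.+1 < 2 ^ (2 * k.+1))%N by apply: ltn_expl.
have : (0 < Y)%N by rewrite expn_gt0 expn_gt0.
rewrite expnS expnMn -/Y; nia.
Qed.

End Expansion.

Theorem lemma3p10 (R : realType) (n w : nat)
    (M : nat -> 'M[R]_w) (M0 : nat -> nat -> 'M[R]_w) :
  (exists p : nat, n = (2 ^ p)%N) -> (0 < w)%N ->
  forall (k l r : nat), isBS n l r ->
  exists S : seq (seq nat * bool),
    [/\ Mseg M M0 l r k = \sum_(s <- S) sgn R s.2 *: M0seq M M0 s.1,
        (size S <= (r - l) ^ (2 * k))%N &
        forall s, s \in S ->
          inIS n l r s.1 /\ ((size s.1).-1 <= k * trunc_log 2 (r - l) + 1)%N].
Proof.
move=> _ _ k l r bs.
have [_ [e [_ [Er _]]]] := bs; subst r.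
have [S [ES szS inS]] := segM_expansion M M0 k bs.
by exists S; rewrite /Mseg addKn trunc_expnK.
Qed.
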